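(* Let $N,A,B\ge1$ and $a\in\mathbb Z^3$ with $|a|\sim A$. Then for either choice of sign $\pm$, $$\sup_{m\in\mathbb Z}\#\{n\in\mathbb Z^3:|n|\sim N,\ |n+a|\sim B,\ |\langle a+n\rangle\pm\langle n\rangle-m|\lesssim1\}\lesssim\min(A,B,N)^{-1}\min(B,N)^3.$$
   Context: $\langle n\rangle=(1+|n|^2)^{1/2}$. ''$|x|\sim N$'' means $c^{-1}N\le|x|\le cN$ for a fixed absolute constant $c$ (and $|x|\le c$ when the scale is $1$); ''$\lesssim1$'' inside the set means bounded by a fixed absolute constant. Implicit constants are absolute. *)

From Stdlib Require Import Reals List ZArith.
Open Scope R_scope.

Definition Z3 : Type := (Z * Z * Z)%type.

Definition z3add (n a : Z3) : Z3 :=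
  match n, a with (n1, n2, n3), (a1, a2, a3) => ((n1 + a1)%Z, (n2 + a2)%Z, (n3 + a3)%Z) end.

Definition nsq (n : Z3) : R :=
  match n with (n1, n2, n3) => IZR n1 ^ 2 + IZR n2 ^ 2 + IZR n3 ^ 2 end.

Definition znorm (n : Z3) : R := sqrt (nsq n).

Definition jbr (n : Z3) : R := sqrt (1 + nsq n).

(* "|x| ~ N" with absolute constant c:  c^{-1} N <= |x| <= c N,
   and |x| <= c when the scale is 1. *)
Definition sim (c x N : R) : Prop :=
  if Req_EM_T N 1 then x <= c else / c * N <= x /\ x <= c * N.

Definition pm (s : bool) (x y : R) : R := if s then x + y else x - y.

Definition Sset (c C0 N B : R) (a : Z3) (s : bool) (m : Z) (n : Z3) : Prop :=
  sim c (znorm n) N /\ sim c (znorm (z3add a n)) B /\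
  Rabs (pm s (jbr (z3add a n)) (jbr n) - IZR m) <= C0.

(* Write u = <a + n> and v = <n>.  After the substitution n -> a + n when B < N, the points n lie
   in a box [-r, r]^3 with r ~ c min(N, B), and the bound to prove is O(r^2 (r / |a| + 1)).  The
   key identity is u^2 - v^2 = 2 a.n + |a|^2, which is affine in n.  Permuting coordinates we may
   assume that |a_3| is the largest coordinate of a; small |a| is covered by the box bound.

   If u + v ~ m (so that m >~ |a|), or u - v ~ m with |m| > |a_3| / 2, dividing u^2 - v^2 by u +- v
   shows that v is within W = O(1 + r / |a|) of an affine function b.n + k with b = -+ a / m.
   When b_1^2 + b_2^2 <= 3/4, squaring puts each plane n_3 = const into a shell
   |Q(x - x0) - T| <~ W r of a positive definite quadratic form Q: either the shell is a small
   disc, or at each of its points a discrete partial derivative of Q is at least sqrt(T) / 8 and Q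
   is convex on the corresponding line.  When |b|^2 >= 1.12, since |grad <n>| < 1, at each point
   away from the origin a discrete partial derivative of the convex function <n> - b.n - k is at
   least 1/40.  Both cases end with the same count: a convex sequence bounded by W with steps at
   least g takes O(W / g) integer points.

   If u - v ~ m with |m| <= |a_3| / 2, then u^2 - v^2 - m (u + v) = (u - v - m)(u + v) = O(r + |a|),
   while along lines in the third direction it grows at rate at least |a_3|, so each line carries
   O(1 + r / |a|) points. *)

From Stdlib Require Import Reals List ZArith Lra Lia Psatz ClassicalDescription.
Open Scope R_scope.

(** * Counting *)

Definition card_le {A} (S : A -> Prop) (K : R) : Prop :=
  forall l : list A, NoDup l -> (forall x, In x l -> S x) -> INR (length l) <= K.

Lemma card_le_ge0 {A} (S : A -> Prop) K : card_le S K -> 0 <= K.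
Proof. intros H. apply (H nil); [constructor | intros _ []]. Qed.

Lemma card_le_empty {A} (S : A -> Prop) : (forall x, ~ S x) -> card_le S 0.
Proof. intros HS [|x l] _ Hl; [simpl; lra | destruct (HS x (Hl x (or_introl eq_refl)))]. Qed.

Lemma card_le_weaken {A} (S T : A -> Prop) K K' :
  card_le S K -> (forall x, T x -> S x) -> K <= K' -> card_le T K'.
Proof. intros HS HTS HK l Hl HT. apply Rle_trans with K; auto. Qed.

Lemma card_le_min {A} (S : A -> Prop) M1 M2 :
  card_le S M1 -> card_le S M2 -> card_le S (Rmin M1 M2).
Proof. intros H1 H2 l Hl HS. apply Rmin_glb; auto. Qed.

Lemma card_le_union {A} (S1 S2 : A -> Prop) K1 K2 :
  card_le S1 K1 -> card_le S2 K2 -> card_le (fun x => S1 x \/ S2 x) (K1 + K2).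
Proof.
  intros H1 H2 l Hl HS.
  set (f := fun x => if excluded_middle_informative (S1 x) then true else false).
  rewrite <- (filter_length f l), plus_INR.
  apply Rplus_le_compat; [apply H1 | apply H2]; try now apply NoDup_filter.
  all: intros x Hx; apply filter_In in Hx as [Hx Hf]; unfold f in Hf.
  all: destruct (excluded_middle_informative (S1 x)); try discriminate; auto.
  destruct (HS x Hx); tauto.
Qed.

Lemma card_le_retract {A B} (S : A -> Prop) (T : B -> Prop) (f : A -> B) (g : B -> A) K :
  (forall y, T y -> S (g y) /\ f (g y) = y) -> card_le S K -> card_le T K.
Proof.
  intros Hfg HS l Hl HT. rewrite <- (length_map g). apply HS.
  - apply NoDup_map_NoDup_ForallPairs; auto. intros x y Hx Hy E.
    rewrite <- (proj2 (Hfg x (HT x Hx))), <- (proj2 (Hfg y (HT y Hy))), E. reflexivity.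
  - intros x Hx. apply in_map_iff in Hx as [y [<- Hy]]. apply Hfg, HT, Hy.
Qed.

Lemma card_le_involution {A} (p : A -> A) (S : A -> Prop) K :
  (forall x, p (p x) = x) -> card_le S K -> card_le (fun x => S (p x)) K.
Proof. intros Hp. apply card_le_retract with (f := p) (g := p). auto. Qed.

Lemma card_le_fibers_list {A K} (pi : A -> K) (S : A -> Prop) B (F : list K) :
  (forall k, card_le (fun x => S x /\ pi x = k) B) ->
  card_le (fun x => S x /\ In (pi x) F) (INR (length F) * B).
Proof.
  intros HB. induction F as [|k F IH].
  - intros [|x l] _ Hl; [simpl; lra|]. destruct (Hl x (or_introl eq_refl)) as [_ []].
  - simpl length. rewrite S_INR.
    apply card_le_weaken with (fun x => (S x /\ pi x = k) \/ (S x /\ In (pi x) F))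
      (B + INR (length F) * B).
    + apply card_le_union; auto.
    + intros x [Hx [E | HF]]; auto.
    + lra.
Qed.

Lemma card_le_fibers {A K} (eqK : forall x y : K, {x = y} + {x <> y}) (pi : A -> K)
  (S : A -> Prop) (Y : K -> Prop) M B :
  0 <= B -> card_le Y M -> (forall x, S x -> Y (pi x)) ->
  (forall k, card_le (fun x => S x /\ pi x = k) B) -> card_le S (M * B).
Proof.
  intros HB HY HSY Hfib l Hl HS.
  set (F := nodup eqK (map pi l)).
  apply Rle_trans with (INR (length F) * B).
  - apply (card_le_fibers_list pi S B F Hfib); auto.
    intros x Hx. split; auto. apply nodup_In, in_map, Hx.
  - apply Rmult_le_compat_r; auto. apply HY; [apply NoDup_nodup|].
    intros k Hk. apply nodup_In, in_map_iff in Hk as [x [<- Hx]]. auto.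
Qed.

Lemma Z_list_min (x : Z) (l : list Z) :
  exists t0, In t0 (x :: l) /\ forall t, In t (x :: l) -> (t0 <= t)%Z.
Proof.
  induction l as [|y l [t0 [Ht0 Hle]]].
  - exists x. split; [left; reflexivity |]. intros t [<- | []]. lia.
  - destruct (Z_le_gt_dec t0 y).
    + exists t0. split; [destruct Ht0; simpl; auto |].
      intros t [<- | [<- | Ht]]; auto; apply Hle; simpl; auto.
    + exists y. split; [simpl; auto |].
      intros t [<- | [<- | Ht]];
        [specialize (Hle x (or_introl eq_refl)) | | specialize (Hle t (or_intror Ht))]; lia.
Qed.

Lemma card_le_Z_diameter (S : Z -> Prop) L :
  0 <= L -> (forall t1 t2, S t1 -> S t2 -> IZR t2 - IZR t1 <= L) -> card_le S (L + 1).
Proof.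
  intros HL Hdiam l Hl HS. destruct l as [|x l']; [simpl; lra|].
  destruct (Z_list_min x l') as [t0 [Ht0 Hle]].
  set (l := x :: l') in *.
  destruct (archimed L) as [Hup1 Hup2].
  assert (Hincl : incl (map (fun t => Z.to_nat (t - t0)) l) (seq 0 (Z.to_nat (up L)))).
  { intros k Hk. apply in_map_iff in Hk as [t [<- Ht]]. apply in_seq.
    specialize (Hle t Ht). specialize (Hdiam t0 t (HS t0 Ht0) (HS t Ht)).
    assert (t - t0 < up L)%Z by (apply lt_IZR; rewrite minus_IZR; lra). lia. }
  apply NoDup_incl_length in Hincl.
  - rewrite length_map, length_seq in Hincl. apply le_INR in Hincl.
    rewrite (INR_IZR_INZ (Z.to_nat _)), Z2Nat.id in Hincl; [lra|]. apply le_IZR. lra.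
  - apply NoDup_map_NoDup_ForallPairs; auto. intros t1 t2 H1 H2 E.
    pose proof (Hle t1 H1). pose proof (Hle t2 H2). lia.
Qed.

Lemma card_le_Z_interval (lo L : R) :
  0 <= L -> card_le (fun t : Z => lo <= IZR t <= lo + L) (L + 1).
Proof. intros HL. apply card_le_Z_diameter; auto. intros t1 t2 H1 H2. lra. Qed.

Lemma card_le_Zabs (r : Z) : (0 <= r)%Z -> card_le (fun t => (Z.abs t <= r)%Z) (2 * IZR r + 1).
Proof.
  intros Hr. assert (0 <= IZR r) by (apply IZR_le; auto).
  apply card_le_weaken with (fun t : Z => - IZR r <= IZR t <= - IZR r + 2 * IZR r) (2 * IZR r + 1).
  - apply card_le_Z_interval. lra.
  - intros t Ht. replace (- IZR r + 2 * IZR r) with (IZR r) by ring.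
    rewrite <- opp_IZR. split; apply IZR_le; lia.
  - lra.
Qed.

Lemma card_le_slices {A} (pi : A -> Z) (S : A -> Prop) r B :
  (0 <= r)%Z -> (forall x, S x -> (Z.abs (pi x) <= r)%Z) ->
  (forall k, card_le (fun x => S x /\ pi x = k) B) -> card_le S ((2 * IZR r + 1) * B).
Proof.
  intros Hr HS Hfib. apply (card_le_fibers Z.eq_dec pi S (fun k => (Z.abs k <= r)%Z)); auto.
  - apply (card_le_ge0 _ _ (Hfib 0%Z)).
  - apply card_le_Zabs, Hr.
Qed.

(** * Lattice boxes *)

Definition coord1 (n : Z3) : Z := fst (fst n).
Definition coord2 (n : Z3) : Z := snd (fst n).
Definition coord3 (n : Z3) : Z := snd n.

Definition box (r : Z) (n : Z3) : Prop :=
  (Z.abs (coord1 n) <= r /\ Z.abs (coord2 n) <= r /\ Z.abs (coord3 n) <= r)%Z.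

Lemma card_le_planes (S : Z3 -> Prop) r B :
  (0 <= r)%Z -> (forall n, S n -> (Z.abs (coord3 n) <= r)%Z) ->
  (forall z, card_le (fun p => S (p, z)) B) -> card_le S ((2 * IZR r + 1) * B).
Proof.
  intros Hr HS Hplane. apply (card_le_slices coord3); auto.
  intros z.
  apply card_le_retract with (S := fun p => S (p, z)) (f := fun p => (p, z)) (g := @fst (Z * Z) Z);
    auto.
  intros [p z'] [Hn Hz]. unfold coord3 in Hz; simpl in *. subst. auto.
Qed.

Lemma card_le_lines (S : Z3 -> Prop) r B :
  (0 <= r)%Z -> (forall n, S n -> Z.abs (coord1 n) <= r /\ Z.abs (coord2 n) <= r)%Z ->
  (forall x y, card_le (fun t => S ((x, y), t)) B) -> card_le S ((2 * IZR r + 1) ^ 2 * B).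
Proof.
  intros Hr HS Hline.
  replace ((2 * IZR r + 1) ^ 2 * B) with ((2 * IZR r + 1) * ((2 * IZR r + 1) * B)) by ring.
  apply (card_le_slices coord1); [auto | intros n Hn; apply HS, Hn |].
  intros x. apply (card_le_slices coord2); [auto | intros n [Hn _]; apply HS, Hn |].
  intros y.
  apply card_le_retract
    with (S := fun t => S ((x, y), t)) (f := fun t => ((x, y), t)) (g := coord3); auto.
  intros [[x' y'] t] [[Hn Hx] Hy]. unfold coord1, coord2 in *; simpl in *. subst. auto.
Qed.

Lemma card_le_box r : (0 <= r)%Z -> card_le (box r) ((2 * IZR r + 1) ^ 3).
Proof.
  intros Hr. replace ((2 * IZR r + 1) ^ 3) with ((2 * IZR r + 1) ^ 2 * (2 * IZR r + 1)) by ring.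
  apply card_le_lines; auto.
  - intros n [H1 [H2 _]]. auto.
  - intros x y. apply card_le_weaken with (fun t => (Z.abs t <= r)%Z) (2 * IZR r + 1).
    + apply card_le_Zabs, Hr.
    + intros t [_ [_ Ht]]. exact Ht.
    + lra.
Qed.

(** * Convex sequences *)

Lemma card_le_separated (h : Z -> R) (S : Z -> Prop) W g :
  0 < g -> 0 <= W -> (forall t, S t -> Rabs (h t) <= W) ->
  (forall t1 t2, S t1 -> S t2 -> (t1 < t2)%Z -> IZR (t2 - t1) * g <= Rabs (h t2 - h t1)) ->
  card_le S (2 * W / g + 1).
Proof.
  intros Hg HW Hbd Hsep. apply card_le_Z_diameter.
  { apply Rmult_le_pos; [lra | left; apply Rinv_0_lt_compat, Hg]. }
  intros t1 t2 H1 H2. destruct (Z_lt_ge_dec t1 t2) as [Hlt | Hge].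
  - specialize (Hsep t1 t2 H1 H2 Hlt). rewrite minus_IZR in Hsep.
    assert (Rabs (h t2 - h t1) <= 2 * W).
    { eapply Rle_trans; [apply Rabs_triang | rewrite Rabs_Ropp].
      pose proof (Hbd t1 H1). pose proof (Hbd t2 H2). lra. }
    apply Rmult_le_reg_r with g; auto. unfold Rdiv. rewrite Rmult_assoc, Rinv_l; lra.
  - assert (IZR t2 <= IZR t1) by (apply IZR_le; lia).
    assert (0 <= 2 * W / g) by (apply Rmult_le_pos; [lra | left; apply Rinv_0_lt_compat, Hg]). lra.
Qed.

Section ConvexSequence.

Variable h : Z -> R.
Hypothesis h_convex : forall t, h (t + 1)%Z - h t <= h (t + 2)%Z - h (t + 1)%Z.

Let slope t := h (t + 1)%Z - h t.

Lemma convex_slope_le t k : slope t <= slope (t + Z.of_nat k)%Z.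
Proof.
  induction k as [|k IH].
  - rewrite Z.add_0_r. lra.
  - unfold slope in *. rewrite Nat2Z.inj_succ. specialize (h_convex (t + Z.of_nat k)).
    replace (t + Z.succ (Z.of_nat k) + 1)%Z with (t + Z.of_nat k + 2)%Z by lia.
    replace (t + Z.succ (Z.of_nat k))%Z with (t + Z.of_nat k + 1)%Z by lia. lra.
Qed.

Lemma convex_chord_ge t k : INR k * slope t <= h (t + Z.of_nat k)%Z - h t.
Proof.
  induction k as [|k IH].
  - rewrite Z.add_0_r. simpl. lra.
  - rewrite S_INR, Nat2Z.inj_succ. pose proof (convex_slope_le t k). unfold slope in *.
    replace (t + Z.succ (Z.of_nat k))%Z with (t + Z.of_nat k + 1)%Z by lia. lra.
Qed.

Lemma convex_chord_le t k : h (t + Z.of_nat k)%Z - h t <= INR k * slope (t + Z.of_nat k)%Z.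
Proof.
  induction k as [|k IH].
  - rewrite Z.add_0_r. simpl. lra.
  - rewrite S_INR, Nat2Z.inj_succ. pose proof (pos_INR k).
    pose proof (convex_slope_le (t + Z.of_nat k) 1) as Hs. simpl Z.of_nat in Hs.
    replace (t + Z.succ (Z.of_nat k))%Z with (t + Z.of_nat k + 1)%Z by lia.
    assert (INR k * slope (t + Z.of_nat k)%Z <= INR k * slope (t + Z.of_nat k + 1)%Z)
      by (apply Rmult_le_compat_l; auto).
    unfold slope in *. lra.
Qed.

Lemma card_le_convex W g : 0 < g -> 0 <= W ->
  card_le (fun t => Rabs (h t) <= W /\ g <= Rabs (h (t + 1)%Z - h t)) (2 * (2 * W / g + 1)).
Proof.
  intros Hg HW.
  assert (Hk : forall t1 t2, (t1 < t2)%Z ->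
            t2 = (t1 + Z.of_nat (Z.to_nat (t2 - t1)))%Z /\
            INR (Z.to_nat (t2 - t1)) = IZR (t2 - t1)).
  { intros t1 t2 Hlt. rewrite INR_IZR_INZ, Z2Nat.id by lia. split; [lia | auto]. }
  apply card_le_weaken with
    (fun t => (Rabs (h t) <= W /\ g <= slope t) \/ (Rabs (h t) <= W /\ slope t <= - g))
    ((2 * W / g + 1) + (2 * W / g + 1)); [apply card_le_union | | lra].
  - apply card_le_separated with (h := h); [auto | auto | intros t Ht; apply Ht |].
    intros t1 t2 [_ H1] _ Hlt. destruct (Hk t1 t2 Hlt) as [E1 E2].
    pose proof (convex_chord_ge t1 (Z.to_nat (t2 - t1))) as C. rewrite <- E1, E2 in C.
    assert (0 <= IZR (t2 - t1)) by (apply IZR_le; lia).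
    assert (IZR (t2 - t1) * g <= IZR (t2 - t1) * slope t1) by (apply Rmult_le_compat_l; auto).
    eapply Rle_trans; [| apply Rle_abs]. lra.
  - apply card_le_separated with (h := h); [auto | auto | intros t Ht; apply Ht |].
    intros t1 t2 _ [_ H2] Hlt. destruct (Hk t1 t2 Hlt) as [E1 E2].
    pose proof (convex_chord_le t1 (Z.to_nat (t2 - t1))) as C. rewrite <- E1, E2 in C.
    assert (0 <= IZR (t2 - t1)) by (apply IZR_le; lia).
    assert (IZR (t2 - t1) * slope t2 <= IZR (t2 - t1) * - g) by (apply Rmult_le_compat_l; auto).
    rewrite <- Rabs_Ropp. eapply Rle_trans; [| apply Rle_abs]. lra.
  - intros t [Hb Hs]. unfold slope.
    destruct (Rle_or_lt 0 (h (t + 1)%Z - h t)).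
    + left. rewrite Rabs_right in Hs; lra.
    + right. rewrite Rabs_left in Hs; lra.
Qed.

End ConvexSequence.

(** * The Japanese bracket *)

Lemma Rabs_le_inv x b : Rabs x <= b -> - b <= x <= b.
Proof. unfold Rabs. destruct (Rcase_abs x); lra. Qed.

Definition hypot (rho t : R) : R := sqrt (rho + t ^ 2).

Lemma hypot_sq rho t : 0 <= rho -> hypot rho t ^ 2 = rho + t ^ 2.
Proof. intros. apply pow2_sqrt. pose proof (pow2_ge_0 t). lra. Qed.

Lemma hypot_ge0 rho t : 0 <= hypot rho t.
Proof. apply sqrt_pos. Qed.

Lemma pow2_le_le p q : 0 <= q -> p ^ 2 <= q ^ 2 -> p <= q.
Proof. intros. nra. Qed.

Lemma Rabs_le_of_sq w rho : 0 <= rho -> w ^ 2 <= rho ^ 2 -> Rabs w <= rho.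
Proof. intros Hr Hw. apply pow2_le_le; [auto |]. rewrite pow2_abs. exact Hw. Qed.

Lemma hypot_convex rho t : 0 <= rho ->
  2 * hypot rho (t + 1) <= hypot rho t + hypot rho (t + 2).
Proof.
  intros Hr.
  pose proof (hypot_sq rho t Hr). pose proof (hypot_sq rho (t + 1) Hr).
  pose proof (hypot_sq rho (t + 2) Hr).
  pose proof (hypot_ge0 rho t). pose proof (hypot_ge0 rho (t + 1)).
  pose proof (hypot_ge0 rho (t + 2)).
  set (A := hypot rho t) in *. set (B := hypot rho (t + 1)) in *. set (C := hypot rho (t + 2)) in *.
  clearbody A B C.
  assert (rho + t * (t + 2) <= A * C).
  { apply pow2_le_le; [nra|]. replace ((A * C) ^ 2) with (A ^ 2 * C ^ 2) by ring. nra. }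
  apply pow2_le_le; nra.
Qed.

Lemma hypot_lipschitz rho x y : 0 <= rho -> Rabs (hypot rho x - hypot rho y) <= Rabs (x - y).
Proof.
  intros Hr.
  pose proof (hypot_sq rho x Hr). pose proof (hypot_sq rho y Hr).
  pose proof (hypot_ge0 rho x). pose proof (hypot_ge0 rho y).
  set (A := hypot rho x) in *. set (B := hypot rho y) in *. clearbody A B.
  assert (rho + x * y <= A * B).
  { apply pow2_le_le; [nra|]. replace ((A * B) ^ 2) with (A ^ 2 * B ^ 2) by ring.
    assert (0 <= rho * (x - y) ^ 2) by (apply Rmult_le_pos; [lra | apply pow2_ge_0]). nra. }
  apply Rsqr_le_abs_0. unfold Rsqr. nra.
Qed.

Lemma hypot_step rho t : 1 <= rho ->
  Rabs (hypot rho (t + 1) - hypot rho t) * hypot rho t <= Rabs t + 1 / 2.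
Proof.
  intros Hr.
  pose proof (hypot_sq rho t ltac:(lra)). pose proof (hypot_sq rho (t + 1) ltac:(lra)).
  pose proof (hypot_ge0 rho t). pose proof (hypot_ge0 rho (t + 1)).
  set (A := hypot rho t) in *. set (B := hypot rho (t + 1)) in *. clearbody A B.
  assert (1 <= A) by nra.
  assert (E : (B - A) * (B + A) = 2 * t + 1) by nra.
  destruct (Rle_or_lt 0 (2 * t + 1)).
  - assert (A <= B) by nra. rewrite Rabs_right by lra.
    assert ((B - A) * (2 * A) <= (B - A) * (B + A)) by nra.
    destruct (Rle_or_lt 0 t); [rewrite Rabs_right by lra | rewrite Rabs_left by lra]; nra.
  - assert (B <= A) by nra. rewrite Rabs_left1, Rabs_left by lra.
    assert (- A <= t) by nra.
    assert (A - 1 <= B) by (apply pow2_le_le; nra).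
    assert ((A - B) * (2 * A - 1) <= - (2 * t + 1)) by nra.
    apply Rmult_le_reg_r with (2 * A - 1); nra.
Qed.

Definition dot (a n : Z3) : R :=
  IZR (coord1 a) * IZR (coord1 n) + IZR (coord2 a) * IZR (coord2 n) +
  IZR (coord3 a) * IZR (coord3 n).

Lemma nsq_coord n : nsq n = IZR (coord1 n) ^ 2 + IZR (coord2 n) ^ 2 + IZR (coord3 n) ^ 2.
Proof. destruct n as [[x y] z]. reflexivity. Qed.

Lemma nsq_ge0 n : 0 <= nsq n.
Proof.
  rewrite nsq_coord. pose proof (pow2_ge_0 (IZR (coord1 n))).
  pose proof (pow2_ge_0 (IZR (coord2 n))). pose proof (pow2_ge_0 (IZR (coord3 n))). lra.
Qed.

Lemma nsq_add a n : nsq (z3add a n) = nsq a + 2 * dot a n + nsq n.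
Proof.
  destruct a as [[a1 a2] a3], n as [[x y] z].
  unfold nsq, dot, z3add, coord1, coord2, coord3; simpl. rewrite !plus_IZR. ring.
Qed.

Lemma znorm_sq a : znorm a ^ 2 = nsq a.
Proof. apply pow2_sqrt, nsq_ge0. Qed.

Lemma znorm_ge0 a : 0 <= znorm a.
Proof. apply sqrt_pos. Qed.

Lemma jbr_sq n : jbr n ^ 2 = 1 + nsq n.
Proof. apply pow2_sqrt. pose proof (nsq_ge0 n). lra. Qed.

Lemma jbr_ge1 n : 1 <= jbr n.
Proof.
  pose proof (jbr_sq n). pose proof (nsq_ge0 n). pose proof (sqrt_pos (1 + nsq n)).
  unfold jbr in *. nra.
Qed.

Lemma jbr_line x y t : jbr ((x, y), t) = hypot (1 + IZR x ^ 2 + IZR y ^ 2) (IZR t).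
Proof. unfold jbr, hypot, nsq. f_equal. ring. Qed.

Lemma jbr_mul_ge p q : Rabs (1 + dot p q) <= jbr p * jbr q.
Proof.
  unfold jbr. rewrite <- sqrt_mult by (pose proof (nsq_ge0 p); pose proof (nsq_ge0 q); lra).
  rewrite <- sqrt_Rsqr_abs. apply sqrt_le_1_alt.
  destruct p as [[x1 x2] x3], q as [[y1 y2] y3].
  unfold Rsqr, dot, nsq, coord1, coord2, coord3; simpl.
  set (u1 := IZR x1); set (u2 := IZR x2); set (u3 := IZR x3).
  set (v1 := IZR y1); set (v2 := IZR y2); set (v3 := IZR y3).
  (* Lagrange's identity for the vectors (1, u) and (1, v). *)
  assert (0 <= (u1 - v1) ^ 2 + (u2 - v2) ^ 2 + (u3 - v3) ^ 2 + (u1 * v2 - u2 * v1) ^ 2 +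
               (u1 * v3 - u3 * v1) ^ 2 + (u2 * v3 - u3 * v2) ^ 2)
    by (repeat apply Rplus_le_le_0_compat; apply pow2_ge_0).
  nra.
Qed.

Lemma jbr_add_sq_sub a n : jbr (z3add a n) ^ 2 - jbr n ^ 2 = 2 * dot a n + znorm a ^ 2.
Proof. rewrite !jbr_sq, znorm_sq, nsq_add. ring. Qed.

Lemma dot_add_l a n : dot (z3add a n) n = dot a n + nsq n.
Proof.
  destruct a as [[a1 a2] a3], n as [[x y] z].
  unfold nsq, dot, z3add, coord1, coord2, coord3; simpl. rewrite !plus_IZR. ring.
Qed.

Lemma jbr_add_sub_le a n : Rabs (jbr (z3add a n) - jbr n) <= znorm a.
Proof.
  pose proof (jbr_mul_ge (z3add a n) n) as CS. apply Rabs_le_inv in CS as [_ CS].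
  rewrite dot_add_l in CS. pose proof (jbr_sq (z3add a n)). pose proof (jbr_sq n).
  rewrite nsq_add in *. apply pow2_le_le; [apply znorm_ge0 |].
  rewrite <- Rsqr_pow2, <- Rsqr_abs, Rsqr_pow2, znorm_sq. nra.
Qed.

Lemma znorm_le_jbr_add a n : znorm a <= jbr (z3add a n) + jbr n.
Proof.
  pose proof (jbr_mul_ge (z3add a n) n) as CS. apply Rabs_le_inv in CS as [CS _].
  rewrite dot_add_l in CS. pose proof (jbr_sq (z3add a n)). pose proof (jbr_sq n).
  pose proof (jbr_ge1 n). pose proof (jbr_ge1 (z3add a n)).
  rewrite nsq_add in *. apply pow2_le_le; [lra |]. rewrite znorm_sq. nra.
Qed.

Lemma IZR_abs_le (k r : Z) : (Z.abs k <= r)%Z -> Rabs (IZR k) <= IZR r.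
Proof. intros H. rewrite <- abs_IZR. apply IZR_le, H. Qed.

Lemma jbr_box_le r n : box r n -> jbr n <= 1 + 3 * IZR r.
Proof.
  intros [H1 [H2 H3]]. apply IZR_abs_le in H1, H2, H3.
  pose proof (Rabs_pos (IZR (coord1 n))). pose proof (Rabs_pos (IZR (coord2 n))).
  pose proof (Rabs_pos (IZR (coord3 n))).
  apply Rle_trans with (1 + Rabs (IZR (coord1 n)) + Rabs (IZR (coord2 n)) + Rabs (IZR (coord3 n)));
    [| lra].
  apply pow2_le_le; [lra |].
  rewrite jbr_sq, nsq_coord, <- (pow2_abs (IZR (coord1 n))), <- (pow2_abs (IZR (coord2 n))),
    <- (pow2_abs (IZR (coord3 n))).
  nra.
Qed.

Lemma box_of_nsq_lt r n : (0 <= r)%Z -> nsq n < (IZR r + 1) ^ 2 -> box r n.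
Proof.
  intros Hr Hn. assert (0 <= IZR r) by (apply IZR_le; auto). rewrite nsq_coord in Hn.
  assert (Hc : forall k : Z, IZR k ^ 2 < (IZR r + 1) ^ 2 -> (Z.abs k <= r)%Z).
  { intros k Hk. assert (Rabs (IZR k) < IZR r + 1).
    { rewrite <- pow2_abs in Hk. pose proof (Rabs_pos (IZR k)). nra. }
    rewrite <- abs_IZR, <- plus_IZR in H0. apply lt_IZR in H0. lia. }
  pose proof (pow2_ge_0 (IZR (coord1 n))). pose proof (pow2_ge_0 (IZR (coord2 n))).
  pose proof (pow2_ge_0 (IZR (coord3 n))).
  split; [| split]; apply Hc; lra.
Qed.

(** * Quadratic forms on the plane *)

Lemma card_le_square (X1 X2 rho : R) : 0 <= rho ->
  card_le (fun x : Z * Z => Rabs (IZR (fst x) - X1) <= rho /\ Rabs (IZR (snd x) - X2) <= rho)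
    ((2 * rho + 1) * (2 * rho + 1)).
Proof.
  intros Hrho.
  apply (card_le_fibers Z.eq_dec snd _ (fun y => X2 - rho <= IZR y <= X2 - rho + 2 * rho));
    [lra | apply card_le_Z_interval; lra | |].
  - intros x [_ H]. apply Rabs_le_inv in H. lra.
  - intros y. apply card_le_retract with (S := fun t : Z => X1 - rho <= IZR t <= X1 - rho + 2 * rho)
      (f := fun t => (t, y)) (g := @fst Z Z); [| apply card_le_Z_interval; lra].
    intros [t y'] [[H _] E]. simpl in *. subst. apply Rabs_le_inv in H. split; [lra | auto].
Qed.

Definition quad (b1 b2 w1 w2 : R) : R := w1 ^ 2 + w2 ^ 2 - (b1 * w1 + b2 * w2) ^ 2.

Lemma quad_complete_square b1 b2 k x y : 1 - b1 ^ 2 - b2 ^ 2 <> 0 ->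
  x ^ 2 + y ^ 2 - (b1 * x + b2 * y + k) ^ 2 =
  quad b1 b2 (x - k * b1 / (1 - b1 ^ 2 - b2 ^ 2)) (y - k * b2 / (1 - b1 ^ 2 - b2 ^ 2))
  - k ^ 2 / (1 - b1 ^ 2 - b2 ^ 2).
Proof. intros. unfold quad. field. auto. Qed.

Lemma quad_bounds b1 b2 w1 w2 :
  (1 - b1 ^ 2 - b2 ^ 2) * (w1 ^ 2 + w2 ^ 2) <= quad b1 b2 w1 w2 <= w1 ^ 2 + w2 ^ 2.
Proof.
  unfold quad.
  pose proof (pow2_ge_0 (b1 * w2 - b2 * w1)). pose proof (pow2_ge_0 (b1 * w1 + b2 * w2)).
  split; nra.
Qed.

Lemma quad_swap b1 b2 w1 w2 : quad b2 b1 w2 w1 = quad b1 b2 w1 w2.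
Proof. unfold quad. ring. Qed.

Lemma quad_convex b1 b2 w1 w2 : b1 ^ 2 <= 1 ->
  quad b1 b2 (w1 + 1) w2 - quad b1 b2 w1 w2 <= quad b1 b2 (w1 + 2) w2 - quad b1 b2 (w1 + 1) w2.
Proof. intros. unfold quad. nra. Qed.

(* The discrete gradient of [quad] is [2 (w - (b.w) b) + O(1)], and
   [|w - (b.w) b| >= (1 - |b|^2) |w|]. *)
Lemma quad_step_large b1 b2 w1 w2 s :
  b1 ^ 2 + b2 ^ 2 <= 3 / 4 -> 8 <= s -> s ^ 2 / 2 <= w1 ^ 2 + w2 ^ 2 ->
  s / 8 <= Rabs (quad b1 b2 (w1 + 1) w2 - quad b1 b2 w1 w2) \/
  s / 8 <= Rabs (quad b1 b2 w1 (w2 + 1) - quad b1 b2 w1 w2).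
Proof.
  intros Hb Hs Hw. unfold quad.
  set (p := b1 * w1 + b2 * w2). set (g1 := w1 - p * b1). set (g2 := w2 - p * b2).
  assert (E1 : (w1 + 1) ^ 2 + w2 ^ 2 - (b1 * (w1 + 1) + b2 * w2) ^ 2 - (w1 ^ 2 + w2 ^ 2 - p ^ 2)
               = 2 * g1 + 1 - b1 ^ 2) by (unfold g1, p; ring).
  assert (E2 : w1 ^ 2 + (w2 + 1) ^ 2 - (b1 * w1 + b2 * (w2 + 1)) ^ 2 - (w1 ^ 2 + w2 ^ 2 - p ^ 2)
               = 2 * g2 + 1 - b2 ^ 2) by (unfold g2, p; ring).
  assert (Eg : g1 ^ 2 + g2 ^ 2 - (1 - b1 ^ 2 - b2 ^ 2) ^ 2 * (w1 ^ 2 + w2 ^ 2) =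
               (2 - b1 ^ 2 - b2 ^ 2) * (b1 * w2 - b2 * w1) ^ 2) by (unfold g1, g2, p; ring).
  assert (0 <= (2 - b1 ^ 2 - b2 ^ 2) * (b1 * w2 - b2 * w1) ^ 2)
    by (apply Rmult_le_pos; [lra | apply pow2_ge_0]).
  assert (Hg : s ^ 2 / 32 <= g1 ^ 2 + g2 ^ 2)
    by (assert ((1 - b1 ^ 2 - b2 ^ 2) ^ 2 >= 1 / 16) by nra; nra).
  rewrite E1, E2. clearbody g1 g2 p.
  assert (0 <= b1 ^ 2 <= 1) by (pose proof (pow2_ge_0 b1); pose proof (pow2_ge_0 b2); lra).
  assert (0 <= b2 ^ 2 <= 1) by (pose proof (pow2_ge_0 b1); pose proof (pow2_ge_0 b2); lra).
  destruct (Rle_or_lt (s / 8) (Rabs (2 * g1 + 1 - b1 ^ 2))) as [Hs1 | Hs1]; [left; auto | right].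
  apply Rabs_def2 in Hs1 as [Hs1 Hs1'].
  assert (g2 ^ 2 >= s ^ 2 / 64) by nra.
  destruct (Rle_or_lt 0 g2).
  - assert (s / 8 <= g2) by nra. rewrite Rabs_right; lra.
  - assert (g2 <= - (s / 8)) by nra. rewrite Rabs_left; lra.
Qed.

Definition qform (b1 b2 X1 X2 : R) (x : Z * Z) : R :=
  quad b1 b2 (IZR (fst x) - X1) (IZR (snd x) - X2).

Lemma card_le_qform_dir1 b1 b2 X1 X2 T W s r :
  b1 ^ 2 <= 1 -> 8 <= s -> 0 <= W -> (0 <= r)%Z ->
  card_le (fun x : Z * Z => (Z.abs (snd x) <= r)%Z /\ Rabs (IZR (snd x) - X2) <= 2 * s /\
             Rabs (qform b1 b2 X1 X2 x - T) <= W /\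
             s / 8 <= Rabs (qform b1 b2 X1 X2 ((fst x + 1)%Z, snd x) - qform b1 b2 X1 X2 x))
    (132 * W + 4 * IZR r + 2).
Proof.
  intros Hb Hs HW Hr. assert (0 <= IZR r) by (apply IZR_le; auto).
  set (Q := qform b1 b2 X1 X2).
  eapply card_le_weaken with (K := Rmin (4 * s + 1) (2 * IZR r + 1) * (32 * W / s + 2));
    [| intros x Hx; exact Hx |].
  - apply (card_le_fibers Z.eq_dec snd _
             (fun y => (Z.abs y <= r)%Z /\ Rabs (IZR y - X2) <= 2 * s)).
    + assert (0 <= 32 * W / s) by (apply Rmult_le_pos; [lra | left; apply Rinv_0_lt_compat; lra]).
      lra.
    + apply card_le_min.
      * apply card_le_weaken
          with (fun t : Z => X2 - 2 * s <= IZR t <= X2 - 2 * s + 4 * s) (4 * s + 1);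
          [apply card_le_Z_interval; lra | | lra].
        intros t [_ Ht]. apply Rabs_le_inv in Ht. lra.
      * apply card_le_weaken with (fun t : Z => (Z.abs t <= r)%Z) (2 * IZR r + 1);
          [apply card_le_Zabs; auto | tauto | lra].
    + intros x Hx. split; apply Hx.
    + intros y. set (h t := Q (t, y) - T).
      apply card_le_retract with
        (S := fun t => Rabs (h t) <= W /\ s / 8 <= Rabs (h (t + 1)%Z - h t))
        (f := fun t => (t, y)) (g := @fst Z Z).
      * intros [t y'] [[_ [_ [H1 H2]]] E]. simpl in *. subst. unfold h.
        assert (ET : forall u v, u - T - (v - T) = u - v) by (intros; ring). rewrite ET. auto.
      * eapply card_le_weaken with (K := 2 * (2 * W / (s / 8) + 1));
          [| intros t Ht; exact Ht | right; field; lra].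
        apply card_le_convex; [| lra | lra]. intros t. unfold h, Q, qform; simpl fst; simpl snd.
        rewrite !plus_IZR. replace (IZR t + IZR 2 - X1) with (IZR t - X1 + 2) by (simpl; ring).
        replace (IZR t + 1 - X1) with (IZR t - X1 + 1) by ring.
        pose proof (quad_convex b1 b2 (IZR t - X1) (IZR y - X2) Hb). lra.
  - assert (32 * W / s <= 4 * W).
    { apply Rmult_le_reg_r with s; [lra |]. unfold Rdiv. rewrite Rmult_assoc, Rinv_l by lra. nra. }
    assert (0 <= 32 * W / s) by (apply Rmult_le_pos; [lra | left; apply Rinv_0_lt_compat; lra]).
    assert (Rmin (4 * s + 1) (2 * IZR r + 1) * (32 * W / s) <= (4 * s + 1) * (32 * W / s))
      by (apply Rmult_le_compat_r; [auto | apply Rmin_l]).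
    assert ((4 * s + 1) * (32 * W / s) = 128 * W + 32 * W / s) by (field; lra).
    pose proof (Rmin_r (4 * s + 1) (2 * IZR r + 1)). lra.
Qed.

Lemma card_le_qform_annulus b1 b2 X1 X2 T W s r :
  b1 ^ 2 + b2 ^ 2 <= 3 / 4 -> 8 <= s -> 0 <= W -> (0 <= r)%Z ->
  card_le (fun x : Z * Z => (Z.abs (fst x) <= r)%Z /\ (Z.abs (snd x) <= r)%Z /\
             Rabs (qform b1 b2 X1 X2 x - T) <= W /\
             s ^ 2 / 2 <= (IZR (fst x) - X1) ^ 2 + (IZR (snd x) - X2) ^ 2 <= 4 * s ^ 2)
    (2 * (132 * W + 4 * IZR r + 2)).
Proof.
  intros Hb Hs HW Hr.
  assert (Hb1 : b1 ^ 2 <= 1) by (pose proof (pow2_ge_0 b2); lra).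
  assert (Hb2 : b2 ^ 2 <= 1) by (pose proof (pow2_ge_0 b1); lra).
  assert (Hw : forall w1 w2, w1 ^ 2 + w2 ^ 2 <= 4 * s ^ 2 -> Rabs w1 <= 2 * s /\ Rabs w2 <= 2 * s).
  { intros w1 w2 H. pose proof (pow2_ge_0 w1). pose proof (pow2_ge_0 w2).
    split; apply Rabs_le_of_sq; lra. }
  eapply card_le_weaken with (K := (132 * W + 4 * IZR r + 2) + (132 * W + 4 * IZR r + 2));
    [apply card_le_union | | lra].
  { apply (card_le_qform_dir1 b1 b2 X1 X2 T W s r Hb1 Hs HW Hr). }
  { apply card_le_involution with (p := fun x : Z * Z => (snd x, fst x)); [intros []; auto |].
    apply (card_le_qform_dir1 b2 b1 X2 X1 T W s r Hb2 Hs HW Hr). }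
  intros [x1 x2] [H1 [H2 [HQ Hann]]]; cbn [fst snd] in *.
  destruct (Hw _ _ (proj2 Hann)) as [Hw1 Hw2].
  destruct (quad_step_large b1 b2 (IZR x1 - X1) (IZR x2 - X2) s Hb Hs (proj1 Hann)) as [D | D].
  - left. unfold qform in *; cbn [fst snd]. rewrite plus_IZR.
    replace (IZR x1 + 1 - X1) with (IZR x1 - X1 + 1) by ring. repeat split; assumption.
  - right. unfold qform in *; cbn [fst snd]. rewrite plus_IZR, !(quad_swap b1 b2).
    replace (IZR x2 + 1 - X2) with (IZR x2 - X2 + 1) by ring. repeat split; assumption.
Qed.

Lemma card_le_qform_shell b1 b2 X1 X2 T W r :
  b1 ^ 2 + b2 ^ 2 <= 3 / 4 -> 0 <= W -> (0 <= r)%Z ->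
  card_le (fun x : Z * Z => (Z.abs (fst x) <= r)%Z /\ (Z.abs (snd x) <= r)%Z /\
             Rabs (qform b1 b2 X1 X2 x - T) <= W)
    (2100 * (W + IZR r + 1)).
Proof.
  intros Hb HW Hr. assert (0 <= IZR r) by (apply IZR_le; auto).
  assert (Hshell : forall x : Z * Z, Rabs (qform b1 b2 X1 X2 x - T) <= W ->
            T - W <= (IZR (fst x) - X1) ^ 2 + (IZR (snd x) - X2) ^ 2 <= 4 * (T + W)).
  { intros x HQ. apply Rabs_le_inv in HQ. unfold qform in HQ.
    set (w := (IZR (fst x) - X1) ^ 2 + (IZR (snd x) - X2) ^ 2).
    pose proof (quad_bounds b1 b2 (IZR (fst x) - X1) (IZR (snd x) - X2)). fold w in H0.
    assert (0 <= w) by (pose proof (pow2_ge_0 (IZR (fst x) - X1));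
                        pose proof (pow2_ge_0 (IZR (snd x) - X2)); unfold w; lra).
    assert (1 / 4 * w <= (1 - b1 ^ 2 - b2 ^ 2) * w) by (apply Rmult_le_compat_r; lra).
    lra. }
  destruct (Rle_or_lt (T + W) (16 * W + 64)) as [Hsmall | Hbig].
  - set (rho := sqrt (64 * W + 256)).
    assert (Hrho : rho ^ 2 = 64 * W + 256) by (apply pow2_sqrt; lra).
    assert (0 <= rho) by apply sqrt_pos.
    assert (0 <= (2 * rho - 1) ^ 2) by apply pow2_ge_0.
    apply card_le_weaken with
      (fun x : Z * Z => Rabs (IZR (fst x) - X1) <= rho /\ Rabs (IZR (snd x) - X2) <= rho)
      ((2 * rho + 1) * (2 * rho + 1)); [apply card_le_square; auto | | nra].
    intros x [_ [_ HQ]]. destruct (Hshell x HQ) as [_ Hx].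
    pose proof (pow2_ge_0 (IZR (fst x) - X1)). pose proof (pow2_ge_0 (IZR (snd x) - X2)).
    split; apply Rabs_le_of_sq; lra.
  - set (s := sqrt (T + W)).
    assert (Hs2 : s ^ 2 = T + W) by (apply pow2_sqrt; lra).
    assert (0 <= s) by apply sqrt_pos.
    assert (8 <= s) by (apply pow2_le_le; lra).
    apply card_le_weaken with
      (fun x : Z * Z => (Z.abs (fst x) <= r)%Z /\ (Z.abs (snd x) <= r)%Z /\
         Rabs (qform b1 b2 X1 X2 x - T) <= W /\
         s ^ 2 / 2 <= (IZR (fst x) - X1) ^ 2 + (IZR (snd x) - X2) ^ 2 <= 4 * s ^ 2)
      (2 * (132 * W + 4 * IZR r + 2)); [apply card_le_qform_annulus; auto | | lra].
    intros x [Hx1 [Hx2 HQ]]. destruct (Hshell x HQ). repeat split; auto; lra.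
Qed.

(** * Affine approximation of the bracket *)

Definition lin (b1 b2 b3 c : R) (n : Z3) : R :=
  b1 * IZR (coord1 n) + b2 * IZR (coord2 n) + b3 * IZR (coord3 n) + c.

Definition gap (b1 b2 b3 c : R) (n : Z3) : R := jbr n - lin b1 b2 b3 c n.

Lemma jbr_sq_sub_lin_sq_le b1 b2 b3 c W r n : box r n -> Rabs (gap b1 b2 b3 c n) <= W ->
  Rabs (jbr n ^ 2 - lin b1 b2 b3 c n ^ 2) <= W * (2 * (1 + 3 * IZR r) + W).
Proof.
  intros Hn HW. unfold gap in HW. pose proof (jbr_box_le r n Hn). pose proof (jbr_ge1 n).
  pose proof (Rabs_le_inv _ _ HW).
  replace (jbr n ^ 2 - lin b1 b2 b3 c n ^ 2)
    with ((jbr n - lin b1 b2 b3 c n) * (jbr n + lin b1 b2 b3 c n)) by ring.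
  rewrite Rabs_mult. apply Rmult_le_compat; auto using Rabs_pos. apply Rabs_le. lra.
Qed.

Lemma card_le_affine_flat b1 b2 b3 c W r :
  b1 ^ 2 + b2 ^ 2 <= 3 / 4 -> 0 <= W -> (0 <= r)%Z ->
  card_le (fun n => box r n /\ Rabs (gap b1 b2 b3 c n) <= W)
    ((2 * IZR r + 1) * (2100 * (W * (2 * (1 + 3 * IZR r) + W) + IZR r + 1))).
Proof.
  intros Hb HW Hr. assert (0 <= IZR r) by (apply IZR_le; auto).
  apply card_le_planes; [auto | intros n [[_ [_ Hn]] _]; exact Hn |].
  intros z. set (d := 1 - b1 ^ 2 - b2 ^ 2). set (k := b3 * IZR z + c).
  assert (Hd : 1 - b1 ^ 2 - b2 ^ 2 <> 0) by (apply Rgt_not_eq; lra).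
  apply card_le_weaken with
    (fun x : Z * Z => (Z.abs (fst x) <= r)%Z /\ (Z.abs (snd x) <= r)%Z /\
       Rabs (qform b1 b2 (k * b1 / d) (k * b2 / d) x - (k ^ 2 / d - (1 + IZR z ^ 2)))
         <= W * (2 * (1 + 3 * IZR r) + W))
    (2100 * (W * (2 * (1 + 3 * IZR r) + W) + IZR r + 1));
    [apply card_le_qform_shell; auto; nra | | lra].
  intros [x y] [Hn HW']. pose proof (jbr_sq_sub_lin_sq_le b1 b2 b3 c W r _ Hn HW') as Hsq.
  destruct Hn as [H1 [H2 _]]. unfold coord1, coord2 in *; cbn [fst snd] in *.
  repeat split; auto. unfold qform; cbn [fst snd].
  rewrite jbr_sq in Hsq. unfold lin, nsq, coord1, coord2, coord3 in Hsq; cbn [fst snd] in Hsq.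
  replace (quad b1 b2 (IZR x - k * b1 / d) (IZR y - k * b2 / d) - (k ^ 2 / d - (1 + IZR z ^ 2)))
    with (IZR x ^ 2 + IZR y ^ 2 - (b1 * IZR x + b2 * IZR y + k) ^ 2 + (1 + IZR z ^ 2))
    by (unfold d; rewrite quad_complete_square by exact Hd; ring).
  unfold k. replace (IZR x ^ 2 + IZR y ^ 2 - (b1 * IZR x + b2 * IZR y + (b3 * IZR z + c)) ^ 2 +
                     (1 + IZR z ^ 2))
    with (1 + (IZR x ^ 2 + IZR y ^ 2 + IZR z ^ 2) - (b1 * IZR x + b2 * IZR y + b3 * IZR z + c) ^ 2)
    by ring. exact Hsq.
Qed.

Definition shift1 (n : Z3) : Z3 := (((coord1 n + 1)%Z, coord2 n), coord3 n).
Definition shift2 (n : Z3) : Z3 := ((coord1 n, (coord2 n + 1)%Z), coord3 n).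
Definition shift3 (n : Z3) : Z3 := ((coord1 n, coord2 n), (coord3 n + 1)%Z).

Definition perm13 (n : Z3) : Z3 := ((coord3 n, coord2 n), coord1 n).
Definition perm23 (n : Z3) : Z3 := ((coord1 n, coord3 n), coord2 n).

Lemma perm13_involutive n : perm13 (perm13 n) = n.
Proof. destruct n as [[x y] z]. reflexivity. Qed.

Lemma perm23_involutive n : perm23 (perm23 n) = n.
Proof. destruct n as [[x y] z]. reflexivity. Qed.

Lemma shift3_perm13 n : shift3 (perm13 n) = perm13 (shift1 n).
Proof. destruct n as [[x y] z]. reflexivity. Qed.

Lemma shift3_perm23 n : shift3 (perm23 n) = perm23 (shift2 n).
Proof. destruct n as [[x y] z]. reflexivity. Qed.

Lemma nsq_perm13 n : nsq (perm13 n) = nsq n.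
Proof. destruct n as [[x y] z]. unfold nsq, perm13, coord1, coord2, coord3; simpl. ring. Qed.

Lemma nsq_perm23 n : nsq (perm23 n) = nsq n.
Proof. destruct n as [[x y] z]. unfold nsq, perm23, coord1, coord2, coord3; simpl. ring. Qed.

Lemma jbr_perm13 n : jbr (perm13 n) = jbr n.
Proof. unfold jbr. rewrite nsq_perm13. reflexivity. Qed.

Lemma jbr_perm23 n : jbr (perm23 n) = jbr n.
Proof. unfold jbr. rewrite nsq_perm23. reflexivity. Qed.

Lemma lin_perm13 b1 b2 b3 c n : lin b1 b2 b3 c (perm13 n) = lin b3 b2 b1 c n.
Proof. unfold lin, perm13, perm23, coord1, coord2, coord3; cbn [fst snd]. ring. Qed.

Lemma lin_perm23 b1 b2 b3 c n : lin b1 b2 b3 c (perm23 n) = lin b1 b3 b2 c n.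
Proof. unfold lin, perm13, perm23, coord1, coord2, coord3; cbn [fst snd]. ring. Qed.

Lemma box_perm13 r n : box r (perm13 n) <-> box r n.
Proof. unfold box, perm13, perm23, coord1, coord2, coord3; cbn [fst snd]. tauto. Qed.

Lemma box_perm23 r n : box r (perm23 n) <-> box r n.
Proof. unfold box, perm13, perm23, coord1, coord2, coord3; cbn [fst snd]. tauto. Qed.

Lemma jbr_step3 n : Rabs (jbr (shift3 n) - jbr n) * jbr n <= Rabs (IZR (coord3 n)) + 1 / 2.
Proof.
  destruct n as [[x y] z]. unfold shift3, coord1, coord2, coord3; cbn [fst snd].
  rewrite !jbr_line, plus_IZR. apply hypot_step.
  pose proof (pow2_ge_0 (IZR x)). pose proof (pow2_ge_0 (IZR y)). lra.
Qed.

Lemma jbr_step1 n : Rabs (jbr (shift1 n) - jbr n) * jbr n <= Rabs (IZR (coord1 n)) + 1 / 2.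
Proof.
  rewrite <- (jbr_perm13 (shift1 n)), <- shift3_perm13, <- (jbr_perm13 n). apply jbr_step3.
Qed.

Lemma jbr_step2 n : Rabs (jbr (shift2 n) - jbr n) * jbr n <= Rabs (IZR (coord2 n)) + 1 / 2.
Proof.
  rewrite <- (jbr_perm23 (shift2 n)), <- shift3_perm23, <- (jbr_perm23 n). apply jbr_step3.
Qed.

Lemma discrete_gradient_sq_le (d1 d2 d3 X Y Z v : R) :
  300 <= v -> v ^ 2 = 1 + (X ^ 2 + Y ^ 2 + Z ^ 2) ->
  Rabs d1 * v <= Rabs X + 1 / 2 -> Rabs d2 * v <= Rabs Y + 1 / 2 -> Rabs d3 * v <= Rabs Z + 1 / 2 ->
  d1 ^ 2 + d2 ^ 2 + d3 ^ 2 <= 101 / 100.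
Proof.
  intros Hv Hv2 H1 H2 H3.
  assert (Hsq : forall d x,
            Rabs d * v <= Rabs x + 1 / 2 -> d ^ 2 * v ^ 2 <= x ^ 2 + Rabs x + 1 / 4).
  { intros d x H. rewrite <- (pow2_abs d), <- (pow2_abs x).
    pose proof (Rabs_pos d). pose proof (Rabs_pos x).
    replace (Rabs d ^ 2 * v ^ 2) with ((Rabs d * v) ^ 2) by ring.
    replace (Rabs x ^ 2 + Rabs x + 1 / 4) with ((Rabs x + 1 / 2) ^ 2) by field.
    apply pow_incr. split; [nra | auto]. }
  assert (Hcoord : forall x y z, v ^ 2 = 1 + (x ^ 2 + y ^ 2 + z ^ 2) -> Rabs x <= v).
  { intros x y z E. apply Rabs_le_of_sq; [lra |].
    pose proof (pow2_ge_0 y). pose proof (pow2_ge_0 z). lra. }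
  pose proof (Hcoord X Y Z Hv2). pose proof (Hcoord Y X Z ltac:(lra)).
  pose proof (Hcoord Z X Y ltac:(lra)).
  apply Hsq in H1, H2, H3.
  assert (3 * v <= v ^ 2 / 100) by nra.
  apply Rmult_le_reg_r with (v ^ 2); nra.
Qed.

Lemma far_from_small_vector (d1 d2 d3 b1 b2 b3 : R) :
  d1 ^ 2 + d2 ^ 2 + d3 ^ 2 <= 101 / 100 -> 112 / 100 <= b1 ^ 2 + b2 ^ 2 + b3 ^ 2 ->
  1 / 40 <= Rabs (d1 - b1) \/ 1 / 40 <= Rabs (d2 - b2) \/ 1 / 40 <= Rabs (d3 - b3).
Proof.
  intros Hd Hb.
  destruct (Rle_or_lt (1 / 40) (Rabs (d1 - b1))) as [E1 | E1]; [left; auto |].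
  destruct (Rle_or_lt (1 / 40) (Rabs (d2 - b2))) as [E2 | E2]; [right; left; auto |].
  destruct (Rle_or_lt (1 / 40) (Rabs (d3 - b3))) as [E3 | E3]; [right; right; auto | exfalso].
  assert (Hsmall : forall e, Rabs e < 1 / 40 -> e ^ 2 < 1 / 1600).
  { intros e He. rewrite <- pow2_abs. pose proof (Rabs_pos e). nra. }
  apply Hsmall in E1, E2, E3.
  (* [|d - b|^2 < 3 / 1600] is incompatible with [|0.95 b - d|^2 >= 0]. *)
  pose proof (pow2_ge_0 (95 / 100 * b1 - d1)). pose proof (pow2_ge_0 (95 / 100 * b2 - d2)).
  pose proof (pow2_ge_0 (95 / 100 * b3 - d3)).
  lra.
Qed.

Lemma gap_perm13 b1 b2 b3 c n : gap b3 b2 b1 c (perm13 n) = gap b1 b2 b3 c n.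
Proof. unfold gap. rewrite jbr_perm13, lin_perm13. reflexivity. Qed.

Lemma gap_perm23 b1 b2 b3 c n : gap b1 b3 b2 c (perm23 n) = gap b1 b2 b3 c n.
Proof. unfold gap. rewrite jbr_perm23, lin_perm23. reflexivity. Qed.

Lemma gap_steps_large b1 b2 b3 c n : 300 <= jbr n -> 112 / 100 <= b1 ^ 2 + b2 ^ 2 + b3 ^ 2 ->
  1 / 40 <= Rabs (gap b1 b2 b3 c (shift1 n) - gap b1 b2 b3 c n) \/
  1 / 40 <= Rabs (gap b1 b2 b3 c (shift2 n) - gap b1 b2 b3 c n) \/
  1 / 40 <= Rabs (gap b1 b2 b3 c (shift3 n) - gap b1 b2 b3 c n).
Proof.
  intros Hv Hb.
  replace (gap b1 b2 b3 c (shift1 n) - gap b1 b2 b3 c n) with (jbr (shift1 n) - jbr n - b1)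
    by (unfold gap, lin, shift1, coord1, coord2, coord3; cbn [fst snd]; rewrite plus_IZR; ring).
  replace (gap b1 b2 b3 c (shift2 n) - gap b1 b2 b3 c n) with (jbr (shift2 n) - jbr n - b2)
    by (unfold gap, lin, shift2, coord1, coord2, coord3; cbn [fst snd]; rewrite plus_IZR; ring).
  replace (gap b1 b2 b3 c (shift3 n) - gap b1 b2 b3 c n) with (jbr (shift3 n) - jbr n - b3)
    by (unfold gap, lin, shift3, coord1, coord2, coord3; cbn [fst snd]; rewrite plus_IZR; ring).
  apply far_from_small_vector; auto.
  apply (discrete_gradient_sq_le _ _ _ (IZR (coord1 n)) (IZR (coord2 n)) (IZR (coord3 n)) (jbr n));
    auto using jbr_step1, jbr_step2, jbr_step3.
  rewrite jbr_sq, nsq_coord. reflexivity.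
Qed.

Lemma card_le_gap_dir3 b1 b2 b3 c W g r : 0 < g -> 0 <= W -> (0 <= r)%Z ->
  card_le (fun n => box r n /\ Rabs (gap b1 b2 b3 c n) <= W /\
                    g <= Rabs (gap b1 b2 b3 c (shift3 n) - gap b1 b2 b3 c n))
    ((2 * IZR r + 1) ^ 2 * (2 * (2 * W / g + 1))).
Proof.
  intros Hg HW Hr. apply card_le_lines; [auto | intros n [[H1 [H2 _]] _]; auto |].
  intros x y.
  apply card_le_weaken with
    (fun t => Rabs (gap b1 b2 b3 c ((x, y), t)) <= W /\
              g <= Rabs (gap b1 b2 b3 c ((x, y), (t + 1)%Z) - gap b1 b2 b3 c ((x, y), t)))
    (2 * (2 * W / g + 1)); [apply card_le_convex; auto | intros t [_ Ht]; exact Ht | lra].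
  intros t. unfold gap, lin, coord1, coord2, coord3; cbn [fst snd]. rewrite !jbr_line, !plus_IZR.
  replace (IZR t + IZR 2) with (IZR t + 2) by reflexivity.
  pose proof (pow2_ge_0 (IZR x)). pose proof (pow2_ge_0 (IZR y)).
  pose proof (hypot_convex (1 + IZR x ^ 2 + IZR y ^ 2) (IZR t) ltac:(lra)).
  replace (IZR t + 1 + 1) with (IZR t + 2) by ring. lra.
Qed.

Lemma box_of_jbr_lt n : jbr n < 300 -> box 299 n.
Proof.
  intros Hn. apply box_of_nsq_lt; [lia |].
  pose proof (jbr_sq n). pose proof (jbr_ge1 n).
  replace (IZR 299 + 1) with 300 by (simpl; lra). nra.
Qed.

Lemma card_le_affine_steep b1 b2 b3 c W r :
  112 / 100 <= b1 ^ 2 + b2 ^ 2 + b3 ^ 2 -> 0 <= W -> (0 <= r)%Z ->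
  card_le (fun n => box r n /\ Rabs (gap b1 b2 b3 c n) <= W)
    (599 ^ 3 + 3 * ((2 * IZR r + 1) ^ 2 * (2 * (2 * W / (1 / 40) + 1)))).
Proof.
  intros Hb HW Hr. set (K := (2 * IZR r + 1) ^ 2 * (2 * (2 * W / (1 / 40) + 1))).
  eapply card_le_weaken with (K := 599 ^ 3 + (K + (K + K))); [| | lra].
  { apply card_le_union; [| apply card_le_union; [| apply card_le_union]].
    - replace 599 with (2 * IZR 299 + 1) by (simpl; lra). apply card_le_box. lia.
    - apply card_le_involution with (p := perm13); [apply perm13_involutive |].
      apply (card_le_gap_dir3 b3 b2 b1 c W (1 / 40) r); lra || auto.
    - apply card_le_involution with (p := perm23); [apply perm23_involutive |].
      apply (card_le_gap_dir3 b1 b3 b2 c W (1 / 40) r); lra || auto.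
    - apply (card_le_gap_dir3 b1 b2 b3 c W (1 / 40) r); lra || auto. }
  intros n [Hn HW'].
  destruct (Rlt_or_le (jbr n) 300) as [Hsmall | Hlarge];
    [left; apply box_of_jbr_lt, Hsmall | right].
  rewrite shift3_perm13, shift3_perm23, !gap_perm13, !gap_perm23, box_perm13, box_perm23.
  destruct (gap_steps_large b1 b2 b3 c n Hlarge Hb) as [D | [D | D]]; tauto.
Qed.

(** * Level sets of u + v and u - v *)

Lemma jbr_line_lipschitz x y t1 t2 :
  Rabs (jbr ((x, y), t2) - jbr ((x, y), t1)) <= Rabs (IZR t2 - IZR t1).
Proof.
  rewrite !jbr_line. apply hypot_lipschitz.
  pose proof (pow2_ge_0 (IZR x)). pose proof (pow2_ge_0 (IZR y)). lra.
Qed.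

Lemma z3add_line a x y t :
  z3add a ((x, y), t) = ((coord1 a + x)%Z, (coord2 a + y)%Z, (coord3 a + t)%Z).
Proof. destruct a as [[a1 a2] a3]. reflexivity. Qed.

Definition sq_defect (a : Z3) (M : R) (n : Z3) : R :=
  2 * dot a n + znorm a ^ 2 - M * (jbr (z3add a n) + jbr n).

Lemma sq_defect_eq a M n :
  sq_defect a M n = (jbr (z3add a n) - jbr n - M) * (jbr (z3add a n) + jbr n).
Proof. unfold sq_defect. rewrite <- jbr_add_sq_sub. ring. Qed.

Lemma sq_defect_box_le a M C0 r n : box r n -> Rabs (jbr (z3add a n) - jbr n - M) <= C0 ->
  Rabs (sq_defect a M n) <= C0 * (2 * (1 + 3 * IZR r) + znorm a).
Proof.
  intros Hn HC. rewrite sq_defect_eq, Rabs_mult.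
  pose proof (jbr_add_sub_le a n). pose proof (jbr_box_le r n Hn).
  pose proof (jbr_ge1 n). pose proof (jbr_ge1 (z3add a n)). apply Rabs_le_inv in H.
  rewrite (Rabs_right (jbr (z3add a n) + jbr n)) by lra.
  apply Rmult_le_compat; auto using Rabs_pos; lra.
Qed.

(* Along a line in the third direction [2 a.n] grows at rate [2 |a_3|], while [M (u + v)] moves at
   rate at most [2 |M|], both brackets being 1-Lipschitz there. *)
Lemma sq_defect_line_sep a M x y t1 t2 : 2 * Rabs M <= Rabs (IZR (coord3 a)) -> (t1 < t2)%Z ->
  IZR (t2 - t1) * Rabs (IZR (coord3 a)) <=
  Rabs (sq_defect a M ((x, y), t2) - sq_defect a M ((x, y), t1)).
Proof.
  intros HM Ht. rewrite minus_IZR.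
  assert (HD : 0 < IZR t2 - IZR t1) by (apply Rlt_0_minus, IZR_lt, Ht).
  pose proof (jbr_line_lipschitz x y t1 t2) as Lv.
  pose proof (jbr_line_lipschitz (coord1 a + x) (coord2 a + y) (coord3 a + t1) (coord3 a + t2))
    as Lu.
  rewrite <- !z3add_line, !plus_IZR in Lu.
  replace (IZR (coord3 a) + IZR t2 - (IZR (coord3 a) + IZR t1)) with (IZR t2 - IZR t1) in Lu
    by ring.
  rewrite (Rabs_right (IZR t2 - IZR t1)) in Lu, Lv by lra.
  set (D := IZR t2 - IZR t1) in *.
  set (du := jbr (z3add a ((x, y), t2)) - jbr (z3add a ((x, y), t1))) in *.
  set (dv := jbr ((x, y), t2) - jbr ((x, y), t1)) in *.
  replace (sq_defect a M ((x, y), t2) - sq_defect a M ((x, y), t1))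
    with (2 * IZR (coord3 a) * D - M * (du + dv))
    by (unfold sq_defect, dot, du, dv, D, coord1, coord2, coord3; cbn [fst snd]; ring).
  assert (Rabs (M * (du + dv)) <= Rabs M * (2 * D)).
  { rewrite Rabs_mult. apply Rmult_le_compat_l; [apply Rabs_pos |].
    eapply Rle_trans; [apply Rabs_triang | lra]. }
  assert (Rabs (2 * IZR (coord3 a) * D) = 2 * Rabs (IZR (coord3 a)) * D).
  { rewrite !Rabs_mult, (Rabs_right 2), (Rabs_right D) by lra. ring. }
  pose proof (Rabs_triang_inv (2 * IZR (coord3 a) * D) (M * (du + dv))).
  pose proof (Rabs_pos M). nra.
Qed.

Lemma card_le_minus_line a M C0 r : (0 <= r)%Z -> 0 <= C0 ->
  0 < Rabs (IZR (coord3 a)) -> 2 * Rabs M <= Rabs (IZR (coord3 a)) ->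
  card_le (fun n => box r n /\ Rabs (jbr (z3add a n) - jbr n - M) <= C0)
    ((2 * IZR r + 1) ^ 2 *
     (2 * (C0 * (2 * (1 + 3 * IZR r) + znorm a)) / Rabs (IZR (coord3 a)) + 1)).
Proof.
  intros Hr HC0 Ha3 HM. assert (0 <= IZR r) by (apply IZR_le; auto).
  pose proof (znorm_ge0 a).
  apply card_le_lines; [auto | intros n [[H1 [H2 _]] _]; auto |]. intros x y.
  apply card_le_separated with (h := fun t => sq_defect a M ((x, y), t)); [auto | nra | |].
  - intros t [Hn HC]. apply sq_defect_box_le; auto.
  - intros t1 t2 _ _ Ht. apply sq_defect_line_sep; auto.
Qed.

Lemma gap_sum_eq a n M : M <> 0 ->
  gap (- IZR (coord1 a) / M) (- IZR (coord2 a) / M) (- IZR (coord3 a) / M)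
      ((M ^ 2 - znorm a ^ 2) / (2 * M)) n
  = (jbr (z3add a n) + jbr n - M) * (jbr (z3add a n) - jbr n + M) / (2 * M).
Proof.
  intros HM. unfold gap.
  replace (lin _ _ _ _ n) with ((M ^ 2 - (2 * dot a n + znorm a ^ 2)) / (2 * M))
    by (unfold lin, dot; field; auto).
  rewrite <- jbr_add_sq_sub. field. auto.
Qed.

Lemma gap_diff_eq a n M : M <> 0 ->
  gap (IZR (coord1 a) / M) (IZR (coord2 a) / M) (IZR (coord3 a) / M)
      ((znorm a ^ 2 - M ^ 2) / (2 * M)) n
  = (M - (jbr (z3add a n) - jbr n)) * (jbr (z3add a n) + jbr n + M) / (2 * M).
Proof.
  intros HM. unfold gap.
  replace (lin _ _ _ _ n) with ((2 * dot a n + znorm a ^ 2 - M ^ 2) / (2 * M))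
    by (unfold lin, dot; field; auto).
  rewrite <- jbr_add_sq_sub. field. auto.
Qed.

Lemma gap_sum_le a n M C0 : 0 < M -> znorm a <= 3 * M -> 0 <= C0 ->
  Rabs (jbr (z3add a n) + jbr n - M) <= C0 ->
  Rabs (gap (- IZR (coord1 a) / M) (- IZR (coord2 a) / M) (- IZR (coord3 a) / M)
            ((M ^ 2 - znorm a ^ 2) / (2 * M)) n) <= 2 * C0.
Proof.
  intros HM Ha HC0 HC. rewrite gap_sum_eq by lra.
  unfold Rdiv. rewrite !Rabs_mult, Rabs_inv, (Rabs_right (2 * M)) by lra.
  assert (Rabs (jbr (z3add a n) - jbr n + M) <= 4 * M).
  { pose proof (jbr_add_sub_le a n). eapply Rle_trans; [apply Rabs_triang |].
    rewrite (Rabs_right M) by lra. lra. }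
  replace (2 * C0) with (C0 * (4 * M) * / (2 * M)) by (field; lra).
  apply Rmult_le_compat_r; [left; apply Rinv_0_lt_compat; lra |].
  apply Rmult_le_compat; auto using Rabs_pos.
Qed.

Lemma gap_diff_le a n M C0 r : box r n -> 0 <= C0 ->
  Rabs (jbr (z3add a n) - jbr n - M) <= C0 -> znorm a <= 4 * Rabs M -> 1 <= znorm a ->
  Rabs (gap (IZR (coord1 a) / M) (IZR (coord2 a) / M) (IZR (coord3 a) / M)
            ((znorm a ^ 2 - M ^ 2) / (2 * M)) n)
  <= C0 * (12 * ((2 * IZR r + 1) / (znorm a + 1)) + 3).
Proof.
  intros Hn HC0 HC HM Ha. assert (HM0 : 0 < Rabs M) by lra.
  rewrite gap_diff_eq by (intro E; rewrite E, Rabs_R0 in HM0; lra).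
  unfold Rdiv. rewrite !Rabs_mult, Rabs_inv, Rabs_mult, (Rabs_right 2) by lra.
  rewrite Rabs_minus_sym in HC.
  pose proof (jbr_add_sub_le a n) as Hu. apply Rabs_le_inv in Hu.
  pose proof (jbr_box_le r n Hn). pose proof (jbr_ge1 n). pose proof (jbr_ge1 (z3add a n)).
  set (X := 2 * IZR r + 1) in *. set (al := znorm a) in *.
  assert (Hs : Rabs (jbr (z3add a n) + jbr n + M) <= 3 * X + al + Rabs M).
  { eapply Rle_trans; [apply Rabs_triang |]. rewrite Rabs_right by lra. unfold X. lra. }
  assert (HX : 3 * X <= 12 * X * / (al + 1) * (2 * Rabs M)).
  { assert (0 <= X) by (unfold X; lra).
    apply Rmult_le_reg_r with (al + 1); [lra |].
    replace (12 * X * / (al + 1) * (2 * Rabs M) * (al + 1)) with (X * (24 * Rabs M))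
      by (field; lra).
    assert (X * (al + 1) <= X * (8 * Rabs M)) by (apply Rmult_le_compat_l; lra). lra. }
  apply Rle_trans with (C0 * (3 * X + al + Rabs M) * / (2 * Rabs M)).
  - apply Rmult_le_compat_r; [left; apply Rinv_0_lt_compat; lra |].
    apply Rmult_le_compat; auto using Rabs_pos.
  - rewrite Rmult_assoc. apply Rmult_le_compat_l; auto.
    apply Rmult_le_reg_r with (2 * Rabs M); [lra |].
    rewrite Rmult_assoc, Rinv_l by lra. lra.
Qed.

Definition core_bound (C0 : R) (a : Z3) (r : Z) : R :=
  (1 + C0) ^ 2 * (2 * IZR r + 1) ^ 2 * ((2 * IZR r + 1) / (znorm a + 1) + 1).

Lemma core_bound_spec C0 a r : 0 <= C0 -> (1 <= r)%Z ->
  let X := 2 * IZR r + 1 in let Y := X / (znorm a + 1) in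
  3 <= X /\ 0 <= Y <= X /\ 1 <= (1 + C0) ^ 2 /\ 9 <= (1 + C0) ^ 2 * X ^ 2 * (Y + 1) /\
  core_bound C0 a r = (1 + C0) ^ 2 * X ^ 2 * (Y + 1).
Proof.
  intros HC0 Hr X Y. assert (1 <= IZR r) by (apply IZR_le; auto). pose proof (znorm_ge0 a).
  assert (HX : 3 <= X) by (unfold X; lra).
  assert (HY : 0 <= Y <= X).
  { split; [apply Rmult_le_pos; [lra | left; apply Rinv_0_lt_compat; lra] |].
    unfold Y. apply Rmult_le_reg_r with (znorm a + 1); [lra |].
    unfold Rdiv. rewrite Rmult_assoc, Rinv_l by lra. nra. }
  assert (HC1 : 1 <= (1 + C0) ^ 2) by nra.
  assert (9 * 1 <= X ^ 2 * (Y + 1)) by (apply Rmult_le_compat; nra).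
  assert (1 * 9 <= (1 + C0) ^ 2 * (X ^ 2 * (Y + 1))) by (apply Rmult_le_compat; lra).
  split; [exact HX |]. split; [exact HY |]. split; [exact HC1 |].
  split; [lra | reflexivity].
Qed.

Lemma sorted_coeffs_sq a M : M <> 0 ->
  IZR (coord1 a) ^ 2 <= IZR (coord3 a) ^ 2 -> IZR (coord2 a) ^ 2 <= IZR (coord3 a) ^ 2 ->
  (IZR (coord1 a) / M) ^ 2 + (IZR (coord2 a) / M) ^ 2 <= 2 / 3 * (znorm a ^ 2 / M ^ 2) /\
  (IZR (coord1 a) / M) ^ 2 + (IZR (coord2 a) / M) ^ 2 + (IZR (coord3 a) / M) ^ 2
    = znorm a ^ 2 / M ^ 2.
Proof.
  intros HM H1 H2. rewrite znorm_sq, nsq_coord.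
  assert (0 < M ^ 2) by (rewrite <- Rsqr_pow2; apply Rsqr_pos_lt, HM).
  split; [| field; auto].
  replace ((IZR (coord1 a) / M) ^ 2 + (IZR (coord2 a) / M) ^ 2)
    with ((IZR (coord1 a) ^ 2 + IZR (coord2 a) ^ 2) / M ^ 2) by (field; auto).
  unfold Rdiv. rewrite <- Rmult_assoc.
  apply Rmult_le_compat_r; [left; apply Rinv_0_lt_compat; lra | lra].
Qed.

Lemma card_le_plus_sorted C0 a m r : 0 <= C0 -> (1 <= r)%Z ->
  IZR (coord1 a) ^ 2 <= IZR (coord3 a) ^ 2 -> IZR (coord2 a) ^ 2 <= IZR (coord3 a) ^ 2 ->
  20 * (1 + C0) <= znorm a ->
  card_le (fun n => box r n /\ Rabs (jbr (z3add a n) + jbr n - IZR m) <= C0)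
    (23100 * core_bound C0 a r).
Proof.
  intros HC0 Hr H1 H2 Ha.
  destruct (core_bound_spec C0 a r HC0 Hr) as [HX [HY [HC1 [_ ->]]]].
  set (X := 2 * IZR r + 1) in *. set (Y := X / (znorm a + 1)) in *. set (M := IZR m).
  assert (HXY : 0 <= (1 + C0) ^ 2 * X ^ 2 * (Y + 1)) by (apply Rmult_le_pos; [nra | lra]).
  destruct (Rlt_or_le M (95 / 100 * znorm a)) as [Hlow | HM].
  { apply card_le_weaken with (fun _ => False) 0; [apply card_le_empty; auto | | lra].
    intros n [_ Hn]. apply Rabs_le_inv in Hn. pose proof (znorm_le_jbr_add a n). lra. }
  assert (HM0 : M <> 0) by lra.
  destruct (sorted_coeffs_sq a M HM0 H1 H2) as [Hb _].
  assert (Hratio : znorm a ^ 2 / M ^ 2 <= 112 / 100).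
  { assert (0 < M ^ 2) by nra. apply Rmult_le_reg_r with (M ^ 2); auto.
    unfold Rdiv. rewrite Rmult_assoc, Rinv_l by lra. nra. }
  eapply card_le_weaken;
    [apply (card_le_affine_flat (- IZR (coord1 a) / M) (- IZR (coord2 a) / M) (- IZR (coord3 a) / M)
              ((M ^ 2 - znorm a ^ 2) / (2 * M)) (2 * C0) r) | |].
  - replace ((- IZR (coord1 a) / M) ^ 2 + (- IZR (coord2 a) / M) ^ 2)
      with ((IZR (coord1 a) / M) ^ 2 + (IZR (coord2 a) / M) ^ 2) by (field; auto). lra.
  - lra.
  - lia.
  - intros n [Hn HC]. split; [auto |]. apply gap_sum_le; auto; lra.
  - fold X. replace (2 * (1 + 3 * IZR r)) with (3 * X - 1) by (unfold X; ring).
    assert (IZR r + 1 <= X) by (unfold X; pose proof (IZR_le 1 r Hr); lra).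
    assert (Hin : 2 * C0 * (3 * X - 1 + 2 * C0) + IZR r + 1 <= 4 * (1 + C0) ^ 2 * X) by nra.
    assert (X * (2100 * (2 * C0 * (3 * X - 1 + 2 * C0) + IZR r + 1)) <=
            8400 * ((1 + C0) ^ 2 * X ^ 2)) by nra.
    assert ((1 + C0) ^ 2 * X ^ 2 <= (1 + C0) ^ 2 * X ^ 2 * (Y + 1)) by nra.
    lra.
Qed.

Lemma card_le_minus_small_level C0 a M r : 0 <= C0 -> (1 <= r)%Z ->
  IZR (coord1 a) ^ 2 <= IZR (coord3 a) ^ 2 -> IZR (coord2 a) ^ 2 <= IZR (coord3 a) ^ 2 ->
  1 <= znorm a -> 4 * M ^ 2 <= IZR (coord3 a) ^ 2 ->
  card_le (fun n => box r n /\ Rabs (jbr (z3add a n) - jbr n - M) <= C0) (24 * core_bound C0 a r).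
Proof.
  intros HC0 Hr H1 H2 Ha HM.
  destruct (core_bound_spec C0 a r HC0 Hr) as [HX [HY [HC1 [_ ->]]]].
  set (X := 2 * IZR r + 1) in *. set (Y := X / (znorm a + 1)) in *.
  assert (Hal : znorm a ^ 2 <= 3 * IZR (coord3 a) ^ 2) by (rewrite znorm_sq, nsq_coord; lra).
  set (A3 := IZR (coord3 a)) in *. set (al := znorm a) in *.
  assert (HA3 : al <= 2 * Rabs A3).
  { apply pow2_le_le; [pose proof (Rabs_pos A3); lra |].
    replace ((2 * Rabs A3) ^ 2) with (4 * Rabs A3 ^ 2) by ring. rewrite pow2_abs. nra. }
  assert (HMA : 2 * Rabs M <= Rabs A3).
  { apply pow2_le_le; [apply Rabs_pos |].
    replace ((2 * Rabs M) ^ 2) with (4 * Rabs M ^ 2) by ring. rewrite !pow2_abs. lra. }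
  assert (HS : 2 * (1 + 3 * IZR r) + al <= (12 * Y + 2) * Rabs A3).
  { assert (HYal : Y * (al + 1) = X) by (unfold Y; field; lra).
    assert (Y * (al + 1) <= Y * (4 * Rabs A3)) by (apply Rmult_le_compat_l; lra).
    unfold X in HYal. lra. }
  eapply card_le_weaken;
    [apply (card_le_minus_line a M C0 r); fold A3; auto; try lia; lra | auto |].
  assert (Hq : 2 * (C0 * (2 * (1 + 3 * IZR r) + al)) / Rabs A3 <= 24 * C0 * Y + 4 * C0).
  { apply Rmult_le_reg_r with (Rabs A3); [lra |]. unfold Rdiv. rewrite Rmult_assoc, Rinv_l by lra.
    assert (C0 * (2 * (1 + 3 * IZR r) + al) <= C0 * ((12 * Y + 2) * Rabs A3))
      by (apply Rmult_le_compat_l; auto). lra. }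
  fold X A3 al. assert (0 <= X ^ 2) by apply pow2_ge_0.
  assert (24 * C0 * Y + 4 * C0 + 1 <= 24 * ((1 + C0) ^ 2 * (Y + 1))) by nra.
  apply Rle_trans with (X ^ 2 * (24 * ((1 + C0) ^ 2 * (Y + 1))));
    [apply Rmult_le_compat_l; lra | right; ring].
Qed.

Lemma card_le_minus_large_level C0 a M r : 0 <= C0 -> (1 <= r)%Z ->
  IZR (coord1 a) ^ 2 <= IZR (coord3 a) ^ 2 -> IZR (coord2 a) ^ 2 <= IZR (coord3 a) ^ 2 ->
  1 <= znorm a -> IZR (coord3 a) ^ 2 < 4 * M ^ 2 ->
  card_le (fun n => box r n /\ Rabs (jbr (z3add a n) - jbr n - M) <= C0)
    (30000000 * core_bound C0 a r).
Proof.
  intros HC0 Hr H1 H2 Ha HM.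
  assert (HM0 : M <> 0) by (intro E; subst; pose proof (pow2_ge_0 (IZR (coord3 a))); lra).
  destruct (sorted_coeffs_sq a M HM0 H1 H2) as [Hb Hb3].
  assert (Hal : znorm a ^ 2 <= 3 * IZR (coord3 a) ^ 2) by (rewrite znorm_sq, nsq_coord; lra).
  assert (HaM : znorm a <= 4 * Rabs M).
  { apply pow2_le_le; [pose proof (Rabs_pos M); lra |].
    replace ((4 * Rabs M) ^ 2) with (16 * Rabs M ^ 2) by ring. rewrite pow2_abs.
    pose proof (pow2_ge_0 M). lra. }
  destruct (core_bound_spec C0 a r HC0 Hr) as [HX [HY [HC1 [Hcore ->]]]].
  set (X := 2 * IZR r + 1) in *. set (Y := X / (znorm a + 1)) in *.
  set (W := C0 * (12 * Y + 3)). assert (HW : 0 <= W) by (unfold W; nra).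
  assert (Hpt : forall n, box r n /\ Rabs (jbr (z3add a n) - jbr n - M) <= C0 ->
            box r n /\ Rabs (gap (IZR (coord1 a) / M) (IZR (coord2 a) / M) (IZR (coord3 a) / M)
                                   ((znorm a ^ 2 - M ^ 2) / (2 * M)) n) <= W).
  { intros n [Hn HC]. split; [auto | apply gap_diff_le; auto]. }
  destruct (Rle_or_lt (znorm a ^ 2 / M ^ 2) (112 / 100)) as [Hflat | Hsteep].
  - eapply card_le_weaken; [| exact Hpt |]; [apply card_le_affine_flat; [lra | exact HW | lia] |].
    fold X. replace (2 * (1 + 3 * IZR r)) with (3 * X - 1) by (unfold X; ring).
    assert (IZR r + 1 <= X) by (unfold X; pose proof (IZR_le 1 r Hr); lra).
    assert (Hin : W * (3 * X - 1 + W) + IZR r + 1 <= 325 * (1 + C0) ^ 2 * X * (Y + 1)).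
    { unfold W. assert (Y * Y <= X * Y) by nra. nra. }
    assert (X * (2100 * (W * (3 * X - 1 + W) + IZR r + 1)) <=
            X * (2100 * (325 * (1 + C0) ^ 2 * X * (Y + 1))))
      by (apply Rmult_le_compat_l; lra).
    nra.
  - eapply card_le_weaken; [| exact Hpt |]; [apply card_le_affine_steep; [lra | exact HW | lia] |].
    fold X. replace (2 * (2 * W / (1 / 40) + 1)) with (160 * W + 2) by field.
    assert (HWb : 160 * W + 2 <= 2000 * ((1 + C0) ^ 2 * (Y + 1))) by (unfold W; nra).
    assert (X ^ 2 * (160 * W + 2) <= X ^ 2 * (2000 * ((1 + C0) ^ 2 * (Y + 1))))
      by (apply Rmult_le_compat_l; [apply pow2_ge_0 | lra]).
    replace (599 ^ 3) with 214921799 by ring. lra.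
Qed.

Lemma card_le_core_sorted C0 a s m r : 0 <= C0 -> (1 <= r)%Z ->
  IZR (coord1 a) ^ 2 <= IZR (coord3 a) ^ 2 -> IZR (coord2 a) ^ 2 <= IZR (coord3 a) ^ 2 ->
  card_le (fun n => box r n /\ Rabs (pm s (jbr (z3add a n)) (jbr n) - IZR m) <= C0)
    (300000000 * core_bound C0 a r).
Proof.
  intros HC0 Hr H1 H2.
  destruct (core_bound_spec C0 a r HC0 Hr) as [HX [HY [HC1 [_ Hcb]]]].
  assert (Hcb0 : 0 <= core_bound C0 a r) by (rewrite Hcb; apply Rmult_le_pos; [nra | lra]).
  destruct (Rlt_or_le (znorm a) (20 * (1 + C0))) as [Hsmall | Hbig].
  - eapply card_le_weaken; [| intros n [Hn _]; exact Hn |]; [apply card_le_box; lia |].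
    rewrite Hcb. set (X := 2 * IZR r + 1) in *. set (Y := X / (znorm a + 1)) in *.
    pose proof (znorm_ge0 a).
    assert (HXY : X = Y * (znorm a + 1)) by (unfold Y; field; lra).
    assert (Y * (znorm a + 1) <= Y * (21 * (1 + C0) ^ 2)) by (apply Rmult_le_compat_l; nra).
    assert (X ^ 3 = X ^ 2 * (Y * (znorm a + 1))) by (rewrite <- HXY; ring).
    assert (0 <= X ^ 2) by apply pow2_ge_0.
    assert (X ^ 2 * (Y * (znorm a + 1)) <= X ^ 2 * (Y * (21 * (1 + C0) ^ 2)))
      by (apply Rmult_le_compat_l; auto).
    assert (0 <= (1 + C0) ^ 2 * X ^ 2) by nra. nra.
  - destruct s; simpl pm.
    + eapply card_le_weaken; [apply (card_le_plus_sorted C0 a m r); auto | auto | lra].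
    + destruct (Rle_or_lt (4 * IZR m ^ 2) (IZR (coord3 a) ^ 2)).
      * eapply card_le_weaken;
          [apply (card_le_minus_small_level C0 a (IZR m) r); auto; lra | auto | lra].
      * eapply card_le_weaken;
          [apply (card_le_minus_large_level C0 a (IZR m) r); auto; lra | auto | lra].
Qed.

Lemma z3add_perm13 a n : z3add (perm13 a) (perm13 n) = perm13 (z3add a n).
Proof. destruct a as [[a1 a2] a3], n as [[x y] z]. reflexivity. Qed.

Lemma z3add_perm23 a n : z3add (perm23 a) (perm23 n) = perm23 (z3add a n).
Proof. destruct a as [[a1 a2] a3], n as [[x y] z]. reflexivity. Qed.

Lemma core_bound_perm13 C0 a r : core_bound C0 (perm13 a) r = core_bound C0 a r.
Proof. unfold core_bound, znorm. rewrite nsq_perm13. reflexivity. Qed.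

Lemma core_bound_perm23 C0 a r : core_bound C0 (perm23 a) r = core_bound C0 a r.
Proof. unfold core_bound, znorm. rewrite nsq_perm23. reflexivity. Qed.

Lemma card_le_level_perm (p : Z3 -> Z3) C0 a s m r K :
  (forall n, p (p n) = n) -> (forall n, jbr (p n) = jbr n) -> (forall n, box r (p n) <-> box r n) ->
  (forall n, z3add (p a) (p n) = p (z3add a n)) ->
  card_le (fun n => box r n /\ Rabs (pm s (jbr (z3add (p a) n)) (jbr n) - IZR m) <= C0) K ->
  card_le (fun n => box r n /\ Rabs (pm s (jbr (z3add a n)) (jbr n) - IZR m) <= C0) K.
Proof.
  intros Hinv Hjbr Hbox Hadd. apply card_le_retract with (f := p) (g := p).
  intros n [Hn HC]. rewrite Hinv, Hbox, Hadd, !Hjbr. auto.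
Qed.

Lemma card_le_core C0 a s m r : 0 <= C0 -> (1 <= r)%Z ->
  card_le (fun n => box r n /\ Rabs (pm s (jbr (z3add a n)) (jbr n) - IZR m) <= C0)
    (300000000 * core_bound C0 a r).
Proof.
  intros HC0 Hr.
  destruct (Rle_or_lt (IZR (coord1 a) ^ 2) (IZR (coord2 a) ^ 2)) as [H12 | H21].
  - destruct (Rle_or_lt (IZR (coord2 a) ^ 2) (IZR (coord3 a) ^ 2)) as [H23 | H32].
    + apply card_le_core_sorted; auto; lra.
    + apply (card_le_level_perm perm23);
        auto using perm23_involutive, jbr_perm23, box_perm23, z3add_perm23.
      rewrite <- core_bound_perm23. apply card_le_core_sorted; auto;
        unfold perm13, perm23, coord1, coord2, coord3 in *; cbn [fst snd]; lra.
  - destruct (Rle_or_lt (IZR (coord1 a) ^ 2) (IZR (coord3 a) ^ 2)) as [H13 | H31].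
    + apply card_le_core_sorted; auto; lra.
    + apply (card_le_level_perm perm13);
        auto using perm13_involutive, jbr_perm13, box_perm13, z3add_perm13.
      rewrite <- core_bound_perm13. apply card_le_core_sorted; auto;
        unfold perm13, perm23, coord1, coord2, coord3 in *; cbn [fst snd]; lra.
Qed.

Lemma sim_le c x N : 1 <= c -> sim c x N -> x <= c * N.
Proof. unfold sim. destruct (Req_EM_T N 1) as [-> | _]; intros; lra. Qed.

Lemma Rmin_le_of_sim c al A N : 1 <= c -> 0 <= al -> sim c al A -> Rmin A N <= c * (al + 1).
Proof.
  unfold sim. intros Hc Hal. destruct (Req_EM_T A 1) as [-> | _]; intros HA.
  - pose proof (Rmin_l 1 N). nra.
  - destruct HA as [HA _]. pose proof (Rmin_l A N).
    assert (A <= c * al).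
    { apply Rmult_le_reg_l with (/ c); [apply Rinv_0_lt_compat; lra |].
      rewrite <- Rmult_assoc, Rinv_l, Rmult_1_l by lra. lra. }
    lra.
Qed.

Lemma ball_bound_le X al c N mn : 0 <= X <= 5 * c * N -> 0 <= al -> 1 <= c -> 1 <= mn ->
  mn <= N -> mn <= c * (al + 1) ->
  X ^ 2 * (X / (al + 1) + 1) <= 150 * c ^ 4 * / mn * N ^ 3.
Proof.
  intros HX Hal Hc Hmn HmnN Hmna.
  assert (HX2 : X ^ 2 <= 25 * c ^ 2 * N ^ 2).
  { replace (25 * c ^ 2 * N ^ 2) with ((5 * c * N) ^ 2) by ring. apply pow_incr. lra. }
  assert (Hq : X / (al + 1) <= 5 * c ^ 2 * N / mn).
  { apply Rmult_le_reg_r with ((al + 1) * mn); [nra |].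
    replace (X / (al + 1) * ((al + 1) * mn)) with (X * mn) by (field; lra).
    replace (5 * c ^ 2 * N / mn * ((al + 1) * mn)) with (5 * c * N * (c * (al + 1)))
      by (field; lra).
    apply Rmult_le_compat; lra. }
  assert (HN : N ^ 2 <= N ^ 3 / mn).
  { apply Rmult_le_reg_r with mn; [lra |].
    replace (N ^ 3 / mn * mn) with (N ^ 2 * N) by (field; lra).
    apply Rmult_le_compat_l; [apply pow2_ge_0 | lra]. }
  assert (Hc4 : c ^ 2 <= c ^ 4).
  { assert (1 <= c ^ 2) by nra. replace (c ^ 4) with (c ^ 2 * c ^ 2) by ring.
    pose proof (Rmult_le_compat_l (c ^ 2) 1 (c ^ 2) ltac:(lra) ltac:(lra)). lra. }
  assert (0 <= X / (al + 1)) by (apply Rmult_le_pos; [lra | left; apply Rinv_0_lt_compat; lra]).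
  apply Rle_trans with (25 * c ^ 2 * N ^ 2 * (5 * c ^ 2 * N / mn + 1)).
  - apply Rmult_le_compat; [apply pow2_ge_0 | lra | lra | lra].
  - replace (150 * c ^ 4 * / mn * N ^ 3)
      with (125 * c ^ 4 * (N ^ 3 / mn) + 25 * c ^ 4 * (N ^ 3 / mn))
      by (field; lra).
    replace (25 * c ^ 2 * N ^ 2 * (5 * c ^ 2 * N / mn + 1))
      with (125 * c ^ 4 * (N ^ 3 / mn) + 25 * c ^ 2 * N ^ 2) by (field; lra).
    apply Rplus_le_compat_l. apply Rmult_le_compat; try lra; nra.
Qed.

Lemma card_le_ball c C0 A N a s m : 1 <= c -> 0 <= C0 -> 1 <= N -> 1 <= A -> sim c (znorm a) A ->
  card_le (fun n => znorm n <= c * N /\ Rabs (pm s (jbr (z3add a n)) (jbr n) - IZR m) <= C0)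
    (300000000 * (1 + C0) ^ 2 * 150 * c ^ 4 * / Rmin A N * N ^ 3).
Proof.
  intros Hc HC0 HN HA Ha. destruct (archimed (c * N)) as [Hup1 Hup2].
  set (r := up (c * N)) in *.
  assert (HcN : 1 <= c * N) by nra.
  assert (Hr : (1 <= r)%Z) by (apply le_IZR; lra).
  eapply card_le_weaken; [apply (card_le_core C0 a s m r HC0 Hr) | |].
  - intros n [Hn HC]. split; [| exact HC]. apply box_of_nsq_lt; [lia |].
    rewrite <- znorm_sq. pose proof (znorm_ge0 n). nra.
  - unfold core_bound. pose proof (znorm_ge0 a).
    assert (Hmn : 1 <= Rmin A N) by (apply Rmin_glb; lra).
    pose proof (ball_bound_le (2 * IZR r + 1) (znorm a) c N (Rmin A N) ltac:(lra) ltac:(lra) Hc Hmn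
                  (Rmin_r A N) (Rmin_le_of_sim c (znorm a) A N Hc ltac:(lra) Ha)).
    assert (0 <= 300000000 * (1 + C0) ^ 2) by nra.
    apply Rle_trans with (300000000 * (1 + C0) ^ 2 * (150 * c ^ 4 * / Rmin A N * N ^ 3));
      [| right; ring].
    apply Rle_trans with
      (300000000 * (1 + C0) ^ 2 * ((2 * IZR r + 1) ^ 2 * ((2 * IZR r + 1) / (znorm a + 1) + 1)));
      [right; ring | apply Rmult_le_compat_l; auto].
Qed.

Definition zneg (a : Z3) : Z3 := (((- coord1 a)%Z, (- coord2 a)%Z), (- coord3 a)%Z).

Lemma zneg_add a n : z3add (zneg a) (z3add a n) = n.
Proof.
  destruct a as [[a1 a2] a3], n as [[x y] z].
  unfold zneg, z3add, coord1, coord2, coord3; cbn [fst snd]. f_equal; [f_equal |]; lia.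
Qed.

Lemma znorm_zneg a : znorm (zneg a) = znorm a.
Proof.
  destruct a as [[x y] z]. unfold zneg, znorm, nsq, coord1, coord2, coord3; cbn [fst snd].
  rewrite !opp_IZR. f_equal. ring.
Qed.

(* The substitution [k = a + n] exchanges the roles of [n] and [a + n]; in the minus case it also
   flips the sign of [m]. *)
Lemma card_le_ball_shifted c C0 A B a s m : 1 <= c -> 0 <= C0 -> 1 <= B -> 1 <= A ->
  sim c (znorm a) A ->
  card_le (fun n => znorm (z3add a n) <= c * B /\
                    Rabs (pm s (jbr (z3add a n)) (jbr n) - IZR m) <= C0)
    (300000000 * (1 + C0) ^ 2 * 150 * c ^ 4 * / Rmin A B * B ^ 3).
Proof.
  intros Hc HC0 HB HA Ha.
  apply card_le_retract with (f := z3add (zneg a)) (g := z3add a)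
    (S := fun k => znorm k <= c * B /\
                   Rabs (pm s (jbr (z3add (zneg a) k)) (jbr k) - IZR (if s then m else (- m)%Z))
                     <= C0).
  - intros n [Hn HC]. rewrite zneg_add. split; [split; auto | reflexivity].
    destruct s; unfold pm in *.
    + rewrite Rplus_comm. exact HC.
    + rewrite opp_IZR, <- Rabs_Ropp.
      replace (- (jbr n - jbr (z3add a n) - - IZR m)) with (jbr (z3add a n) - jbr n - IZR m)
        by ring.
      exact HC.
  - apply card_le_ball; auto. rewrite znorm_zneg. exact Ha.
Qed.

Theorem lemma4p17 :
  forall c C0 : R, 1 <= c -> 0 <= C0 ->
  exists K : R, 0 < K /\
  forall (N A B : R) (a : Z3),
    1 <= N -> 1 <= A -> 1 <= B ->
    sim c (znorm a) A ->
    forall (s : bool) (m : Z) (l : list Z3),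
      NoDup l ->
      (forall n, In n l -> Sset c C0 N B a s m n) ->
      INR (length l) <= K * / Rmin A (Rmin B N) * (Rmin B N) ^ 3.
Proof.
  intros c C0 Hc HC0. exists (300000000 * (1 + C0) ^ 2 * 150 * c ^ 4). split.
  { repeat apply Rmult_lt_0_compat; try lra; apply pow_lt; lra. }
  intros N A B a HN HA HB Ha s m.
  change (card_le (Sset c C0 N B a s m)
            (300000000 * (1 + C0) ^ 2 * 150 * c ^ 4 * / Rmin A (Rmin B N) * Rmin B N ^ 3)).
  destruct (Rle_or_lt N B) as [HNB | HBN].
  - rewrite (Rmin_right B N) by lra.
    eapply card_le_weaken; [apply (card_le_ball c C0 A N a s m); auto | | lra].
    intros n [Hn [_ HC]]. split; [apply sim_le; auto | exact HC].
  - rewrite (Rmin_left B N) by lra.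
    eapply card_le_weaken; [apply (card_le_ball_shifted c C0 A B a s m); auto | | lra].
    intros n [_ [Hn HC]]. split; [apply sim_le; auto | exact HC].
Qed.
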